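(* Let $\alpha=[a_0;a_1,a_2,\dots]$ be irrational with convergents $p_k/q_k$. For integers $k \ge 1$ and $0 \le M <q_k$ let \[ B_{k,M}^*(x)= \log \frac{P_M^* (\alpha , (-1)^k x/q_k)}{P_M^* (p_k/q_k , (-1)^kx/q_k)} - \sum_{\substack{1 \le n \le M, \\ n \ne q_{k-1},\ n\ne q_k-q_{k-1}}} \sin (\pi n\| q_k \alpha \| /q_k) \cot \left( \pi \frac{n(-1)^k p_k+x}{q_k} \right) , \] where for $\beta\in\{\alpha,p_k/q_k\}$, \[ P_M^*(\beta , y) = \prod_{\substack{1 \le n \le M, \\ n \ne q_{k-1},\ n\ne q_k-q_{k-1}}} |2 \sin (\pi (n \beta + y))| . \] Let $k \ge 1$ and $0 \le M < q_k$, and assume that $q_k \| q_k \alpha \| \le 2(1-c_k)$ and $-2<x \le 2-\frac{q_k \| q_k \alpha \|}{1-c_k}$ with some $c_k$ such that $100/q_k^2 \le c_k<1$. Then \[ -C \frac{\log (4/c_k)}{(2-|x|)^2 a_{k+1}^2} \le B_{k,M}^*(x) \le C \frac{1}{a_{k+1}^2 q_k} \] with a universal constant $C>0$.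
   Context: $p_k/q_k=[a_0;a_1,\dots,a_k]$ are the convergents of $\alpha$ (with $q_{0}=1$); $\|y\|$ is distance to nearest integer. *)

From Stdlib Require Import Reals ZArith List Bool.
Open Scope R_scope.
Local Open Scope bool_scope.

Definition Zfloor (x : R) : Z := Int_part x.

Definition dist_int (y : R) : R :=
  Rmin (y - IZR (Zfloor y)) (IZR (Zfloor y) + 1 - y).

Definition irrational (x : R) : Prop :=
  ~ exists (p q : Z), q <> 0%Z /\ x = IZR p / IZR q.

(* complete quotients: x_0 = alpha, x_{k+1} = 1/(x_k - a_k) *)
Fixpoint cf_tail (alpha : R) (k : nat) : R :=
  match k with
  | O => alpha
  | S k' => / (cf_tail alpha k' - IZR (Zfloor (cf_tail alpha k')))
  end.

Definition cf_a (alpha : R) (k : nat) : Z := Zfloor (cf_tail alpha k).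

(* ((p_k, q_k), (p_{k-1}, q_{k-1})) with p_{-1} = 1, q_{-1} = 0, p_0 = a_0, q_0 = 1 *)
Fixpoint cf_pq (alpha : R) (k : nat) : (Z * Z) * (Z * Z) :=
  match k with
  | O => ((cf_a alpha 0, 1%Z), (1%Z, 0%Z))
  | S k' =>
      let '((p, q), (p', q')) := cf_pq alpha k' in
      let a := cf_a alpha (S k') in
      (((a * p + p')%Z, (a * q + q')%Z), (p, q))
  end.

Definition cf_p (alpha : R) (k : nat) : Z := fst (fst (cf_pq alpha k)).
Definition cf_q (alpha : R) (k : nat) : Z := snd (fst (cf_pq alpha k)).

Definition cot (t : R) : R := cos t / sin t.

Definition idx (alpha : R) (k M : nat) : list nat :=
  filter (fun n : nat =>
            negb (Z.eqb (Z.of_nat n) (cf_q alpha (k - 1)))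
            && negb (Z.eqb (Z.of_nat n) (cf_q alpha k - cf_q alpha (k - 1))))
         (seq 1 M).

Definition Pstar (alpha : R) (k M : nat) (beta y : R) : R :=
  fold_right Rmult 1
    (map (fun n : nat => Rabs (2 * sin (PI * (INR n * beta + y)))) (idx alpha k M)).

Definition Bstar (alpha : R) (k M : nat) (x : R) : R :=
  let p := IZR (cf_p alpha k) in
  let q := IZR (cf_q alpha k) in
  let y := (-1) ^ k * x / q in
  ln (Pstar alpha k M alpha y / Pstar alpha k M (p / q) y)
  - fold_right Rplus 0
      (map (fun n : nat =>
              sin (PI * INR n * dist_int (q * alpha) / q)
              * cot (PI * (INR n * (-1) ^ k * p + x) / q))
           (idx alpha k M)).

From Pilot Require Import Defs.
From Stdlib Require Import Reals ZArith List Lra Lia Psatz Bool.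
Open Scope R_scope.

(* Write [q alpha - p = (-1)^k delta] with [delta = ||q alpha||], so that
   [D = q delta <= 1 / a_{k+1}].  Reducing the arguments modulo [PI], the [n]-th
   summand of [B*] becomes [ln |sin (u + h) / sin u| - sin h cot u] with
   [u = PI (r_n + x) / q] and [h = PI n delta / q], where [r_n] is the residue of
   [(-1)^k n p] modulo [q] nearest to [-x].  With [t = sin h cot u] this equals
   [ln (cos h + t) - t], which is at most [0] and at least
   [-6 t^2 - 2 (1 - cos h) >= -6 D^2 / (r_n + x)^2 - 16 D^2 / q^2].
   Excluding [n = q_{k-1}] and [n = q_k - q_{k-1}] forces [|r_n| >= 2], and
   [n |-> r_n] is injective, so [sum_n 1 / (r_n + x)^2 <= 32 / (2 - |x|)^2].
   The single residue [r_n = -2] may come close to the pole of [cot]; the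
   hypothesis on [x] keeps its summand above [ln (c / 4)]. *)

(** * Elementary estimates *)

Lemma sin_lb_poly a : sin_lb a = a - a^3/6 + a^5/120 - a^7/5040.
Proof.
  unfold sin_lb, sin_approx, sin_term. cbn [sum_f_R0 Nat.mul Nat.add].
  rewrite !fact_simpl, !mult_INR. cbn [Factorial.fact INR]. simpl pow. field.
Qed.

Lemma cos_ub_poly a : cos_ub a = 1 - a^2/2 + a^4/24 - a^6/720 + a^8/40320.
Proof.
  unfold cos_ub, cos_approx, cos_term. cbn [sum_f_R0 Nat.mul Nat.add].
  rewrite !fact_simpl, !mult_INR. cbn [Factorial.fact INR]. simpl pow. field.
Qed.

Lemma cos_lb_poly a : cos_lb a = 1 - a^2/2 + a^4/24 - a^6/720.
Proof.
  unfold cos_lb, cos_approx, cos_term. cbn [sum_f_R0 Nat.mul Nat.add].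
  rewrite !fact_simpl, !mult_INR. cbn [Factorial.fact INR]. simpl pow. field.
Qed.

Lemma PI_ge_3 : 3 <= PI.
Proof. pose proof PI2_3_2. lra. Qed.

Lemma x_cos_le_sin v : 0 <= v <= PI / 2 -> v * cos v <= sin v.
Proof.
  intros [Hv0 Hv1]. pose proof PI_4.
  destruct (SIN v Hv0 ltac:(lra)) as [Hs _].
  destruct (COS v ltac:(lra) Hv1) as [_ Hc].
  rewrite sin_lb_poly in Hs. rewrite cos_ub_poly in Hc.
  assert (v * cos v <= v * (1 - v^2/2 + v^4/24 - v^6/720 + v^8/40320))
    by (apply Rmult_le_compat_l; lra).
  assert (v^2 <= 4) by nra.
  assert (v^6 <= 64) by (replace (v^6) with (v^2 * v^2 * v^2) by ring; nra).
  assert (0 <= v^3 * (1/3 - v^2/30 + v^4/840 - v^6/40320)).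
  { apply Rmult_le_pos; [apply pow_le; lra|]. pose proof (pow2_ge_0 (v^2)). nra. }
  nra.
Qed.

Lemma one_sub_cos_le h : 0 <= h <= 1 -> 1 - cos h <= h^2 / 2.
Proof.
  intros Hh. pose proof PI_ge_3.
  destruct (COS h ltac:(lra) ltac:(lra)) as [Hc _]. rewrite cos_lb_poly in Hc.
  assert (0 <= h^4) by (apply pow_le; lra).
  assert (h^2 <= 4) by nra.
  assert (h^6 <= 4 * h^4) by (replace (h^6) with (h^2 * h^4) by ring; nra).
  lra.
Qed.

Lemma ln_le_sub_1 z : 0 < z -> ln z <= z - 1.
Proof. intros Hz. pose proof (exp_ineq1_le (ln z)). rewrite exp_ln in *; lra. Qed.

Lemma one_sub_inv_le_ln z : 0 < z -> 1 - / z <= ln z.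
Proof.
  intros Hz. pose proof (ln_le_sub_1 (/ z) (Rinv_0_lt_compat z Hz)).
  rewrite ln_Rinv in *; lra.
Qed.

Lemma cot_bound u : 0 < Rabs u <= PI / 2 ->
  sin u <> 0 /\ Rabs (cot u) <= / Rabs u /\ 0 <= u * cot u.
Proof.
  assert (Hpos : forall v, 0 < v <= PI / 2 -> 0 < sin v /\ 0 <= cot v <= / v).
  { intros v Hv. pose proof PI_ge_3.
    assert (0 < sin v) by (apply sin_gt_0; lra).
    assert (0 <= cos v) by (apply cos_ge_0; lra).
    pose proof (x_cos_le_sin v ltac:(lra)). unfold cot.
    split; [lra|split].
    - apply Rmult_le_pos; [lra|left; apply Rinv_0_lt_compat; lra].
    - apply (Rmult_le_reg_r (sin v * v)); [nra|]. field_simplify; lra. }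
  intros Hu. unfold cot in *.
  destruct (Rle_or_lt 0 u) as [Hu0|Hu0].
  - rewrite (Rabs_right u) in * by lra. destruct (Hpos u Hu) as [Hs Hc].
    rewrite Rabs_right by lra.
    repeat split; [apply Rgt_not_eq; lra | lra | apply Rmult_le_pos; lra].
  - rewrite (Rabs_left u) in * by lra. destruct (Hpos (- u) Hu) as [Hs Hc].
    rewrite sin_neg, cos_neg in *.
    replace (cos u / sin u) with (- (cos u / - sin u)) by (field; lra).
    rewrite Rabs_Ropp, Rabs_right by lra.
    repeat split; [apply Rlt_not_eq; lra | lra | nra].
Qed.

Definition Bterm (u h : R) : R := ln (Rabs (sin (u + h)) / Rabs (sin u)) - sin h * cot u.

Lemma sin_add_cot u h : sin u <> 0 -> sin (u + h) = sin u * (cos h + sin h * cot u).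
Proof. intros Hu. rewrite sin_plus. unfold cot. field. exact Hu. Qed.

Lemma Bterm_nonpos u h : sin u <> 0 -> 0 < cos h + sin h * cot u ->
  Bterm u h = ln (cos h + sin h * cot u) - sin h * cot u /\
  Bterm u h <= 0 /\ sin (u + h) <> 0.
Proof.
  intros Hu Hz. unfold Bterm. rewrite (sin_add_cot u h Hu), Rabs_mult.
  assert (0 < Rabs (sin u)) by (apply Rabs_pos_lt; exact Hu).
  replace (Rabs (sin u) * Rabs (cos h + sin h * cot u) / Rabs (sin u))
    with (cos h + sin h * cot u) by (rewrite (Rabs_right (_ + _)) by lra; field; lra).
  pose proof (ln_le_sub_1 _ Hz). pose proof (COS_bound h).
  repeat split; [lra|]. intros Hz0. apply Rmult_integral in Hz0. lra.
Qed.

Lemma ln_sub_lower z t e : z = 1 - e + t -> 0 <= e <= 1/10 -> 2/5 <= z ->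
  -6 * t^2 - 2 * e <= ln z - t.
Proof.
  intros Hz He Hz2.
  pose proof (one_sub_inv_le_ln z ltac:(lra)).
  assert (1 - / z - t = - e - (z - 1)^2 / z) by (subst z; field; lra).
  assert ((z - 1)^2 / z <= 5/2 * (z - 1)^2).
  { assert (/ z <= 5/2) by (replace (5/2) with (/ (2/5)) by field; apply Rinv_le_contravar; lra).
    unfold Rdiv. pose proof (pow2_ge_0 (z - 1)). nra. }
  assert ((z - 1)^2 <= 2 * t^2 + 2 * e^2) by (subst z; pose proof (pow2_ge_0 (t + e)); nra).
  nra.
Qed.

Lemma small_angle_bounds q rho eps D :
  11 <= q -> 0 < eps <= D -> D < 1 -> rho <> 0 -> Rabs rho <= q / 2 ->
  sin (PI * rho / q) <> 0 /\
  0 <= 1 - cos (PI * eps / q) <= 8 * D^2 / q^2 /\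
  Rabs (sin (PI * eps / q) * cot (PI * rho / q)) <= eps / Rabs rho /\
  0 <= rho * (sin (PI * eps / q) * cot (PI * rho / q)).
Proof.
  intros Hq Heps HD Hrho Hrq. pose proof PI_ge_3. pose proof PI_4.
  set (u := PI * rho / q). set (h := PI * eps / q).
  assert (Hrho0 : 0 < Rabs rho) by (apply Rabs_pos_lt; exact Hrho).
  assert (Habsu : Rabs u = PI * Rabs rho / q).
  { unfold u, Rdiv. rewrite !Rabs_mult, Rabs_inv, (Rabs_right PI), (Rabs_right q) by lra. ring. }
  assert (Hu : 0 < Rabs u <= PI / 2).
  { rewrite Habsu. split; [apply Rdiv_lt_0_compat; nra|].
    apply (Rmult_le_reg_r q); [lra|]. field_simplify; nra. }
  assert (Hh : 0 < h <= PI * D / q).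
  { unfold h, Rdiv. split; [apply Rmult_lt_0_compat; [nra|apply Rinv_0_lt_compat; lra]|].
    apply Rmult_le_compat_r; [left; apply Rinv_0_lt_compat; lra|nra]. }
  assert (HDq : PI * D / q <= 4/11) by (apply (Rmult_le_reg_r q); [lra|]; field_simplify; nra).
  destruct (cot_bound u Hu) as (Hs & Hcot & Hsign).
  assert (Hsinh : 0 < sin h <= h) by (split; [apply sin_gt_0|left; apply sin_lt_x]; lra).
  pose proof (one_sub_cos_le h ltac:(lra)). pose proof (COS_bound h).
  split; [exact Hs|split; [split|split]].
  - lra.
  - assert (h^2 <= 16 * D^2 / q^2).
    { apply (Rle_trans _ ((PI * D / q)^2)); [apply pow_incr; lra|].
      replace ((PI * D / q)^2) with (PI^2 * (D^2 / q^2)) by (field; lra).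
      unfold Rdiv. rewrite Rmult_assoc.
      apply Rmult_le_compat_r; [|nra].
      apply Rmult_le_pos; [apply pow2_ge_0|left; apply Rinv_0_lt_compat; nra]. }
    lra.
  - rewrite Rabs_mult, (Rabs_right (sin h)) by lra.
    apply (Rle_trans _ (h * / Rabs u)).
    + apply Rmult_le_compat; [lra|apply Rabs_pos|lra|exact Hcot].
    + right. rewrite Habsu. unfold h. field. lra.
  - assert (0 <= rho * cot u).
    { replace (rho * cot u) with (q / PI * (u * cot u)) by (unfold u; field; lra).
      apply Rmult_le_pos; [|exact Hsign].
      apply Rmult_le_pos; [lra|left; apply Rinv_0_lt_compat; lra]. }
    replace (rho * (sin h * cot u)) with (sin h * (rho * cot u)) by ring.
    apply Rmult_le_pos; lra.
Qed.

Lemma Bterm_bounds_regular q rho eps D :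
  11 <= q -> 0 < eps <= D -> D < 1 -> Rabs rho <= q / 2 -> (0 < rho \/ 2 * D <= - rho) ->
  -6 * (D^2 / rho^2) - 16 * (D^2 / q^2) <= Bterm (PI * rho / q) (PI * eps / q) <= 0 /\
  sin (PI * rho / q) <> 0 /\ sin (PI * rho / q + PI * eps / q) <> 0.
Proof.
  intros Hq Heps HD Hrq Hcase.
  assert (Hrho : rho <> 0) by lra.
  destruct (small_angle_bounds q rho eps D Hq Heps HD Hrho Hrq) as (Hs & Hcos & Ht & Hsign).
  set (t := sin (PI * eps / q) * cot (PI * rho / q)) in *.
  set (e := 1 - cos (PI * eps / q)) in *.
  assert (Hrho0 : 0 < Rabs rho) by (apply Rabs_pos_lt; exact Hrho).
  assert (HtD : Rabs t <= D / Rabs rho).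
  { apply (Rle_trans _ _ _ Ht). unfold Rdiv.
    apply Rmult_le_compat_r; [left; apply Rinv_0_lt_compat|]; lra. }
  assert (Ht2 : t^2 <= D^2 / rho^2).
  { rewrite <- (pow2_abs t), <- (pow2_abs rho).
    replace (D^2 / Rabs rho ^ 2) with ((D / Rabs rho)^2) by (field; lra).
    apply pow_incr. split; [apply Rabs_pos|exact HtD]. }
  assert (He : e <= 1/10).
  { apply (Rle_trans _ (8 * D^2 / q^2)); [lra|].
    apply (Rmult_le_reg_r (q^2)); [nra|]. field_simplify; nra. }
  assert (Hz : 2/5 <= 1 - e + t).
  { destruct Hcase as [Hp|Hn].
    - assert (0 <= t) by (destruct (Rle_or_lt 0 t); [lra|nra]). lra.
    - rewrite (Rabs_left rho) in HtD by lra.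
      assert (D / - rho <= 1/2) by (apply (Rmult_le_reg_r (- rho)); [lra|]; field_simplify; lra).
      pose proof (Rle_abs (- t)). rewrite Rabs_Ropp in *. lra. }
  replace (1 - e + t) with (cos (PI * eps / q) + t) in Hz by (unfold e; ring).
  destruct (Bterm_nonpos (PI * rho / q) (PI * eps / q) Hs ltac:(fold t; lra)) as (HB & Hle & Hs').
  fold t in HB. rewrite HB in *.
  pose proof (ln_sub_lower (cos (PI * eps / q) + t) t e ltac:(unfold e; ring) ltac:(lra) Hz).
  repeat split; try assumption; lra.
Qed.

Lemma Bterm_bounds_near_pole q rho eps D c :
  11 <= q -> 0 < eps <= D -> D < 1 -> rho < 0 -> Rabs rho <= q / 2 ->
  D <= (1 - c) * (- rho) -> 100 / q^2 <= c -> c < 1 ->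
  ln (c / 4) <= Bterm (PI * rho / q) (PI * eps / q) <= 0 /\
  sin (PI * rho / q) <> 0 /\ sin (PI * rho / q + PI * eps / q) <> 0.
Proof.
  intros Hq Heps HD Hrho Hrq HDc Hc Hc1.
  destruct (small_angle_bounds q rho eps D Hq Heps HD ltac:(lra) Hrq) as (Hs & Hcos & Ht & Hsign).
  set (t := sin (PI * eps / q) * cot (PI * rho / q)) in *.
  rewrite (Rabs_left rho) in Ht by lra.
  assert (Htneg : t <= 0) by (destruct (Rle_or_lt t 0); [lra|nra]).
  assert (Ht' : - t <= 1 - c).
  { rewrite Rabs_left1 in Ht by lra.
    apply (Rle_trans _ _ _ Ht). apply (Rmult_le_reg_r (- rho)); [lra|]. field_simplify; lra. }
  assert (8 * D^2 / q^2 <= 8 / 100 * c).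
  { apply (Rle_trans _ (8 / 100 * (100 / q^2))); [|lra].
    apply (Rmult_le_reg_r (q^2)); [nra|]. field_simplify; nra. }
  assert (Hz : c / 4 <= cos (PI * eps / q) + t) by lra.
  assert (0 < 100 / q^2) by (apply Rdiv_lt_0_compat; nra).
  destruct (Bterm_nonpos (PI * rho / q) (PI * eps / q) Hs ltac:(fold t; lra)) as (HB & Hle & Hs').
  fold t in HB. rewrite HB in *.
  assert (ln (c / 4) <= ln (cos (PI * eps / q) + t)).
  { destruct Hz as [Hz|Hz]; [left; apply ln_increasing; lra|rewrite Hz; lra]. }
  pose proof (ln_le_sub_1 (cos (PI * eps / q) + t) ltac:(lra)).
  repeat split; try assumption; lra.
Qed.

(** * Finite sums *)

Definition rsum (l : list R) : R := fold_right Rplus 0 l.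

Section ListSums.

Context {A : Type}.

Lemma rsum_le (f g : A -> R) (L : list A) :
  (forall a, In a L -> f a <= g a) -> rsum (map f L) <= rsum (map g L).
Proof.
  induction L as [|a L IH]; simpl; intros Hfg; [lra|].
  pose proof (Hfg a (or_introl eq_refl)). pose proof (IH (fun b Hb => Hfg b (or_intror Hb))).
  unfold rsum in *. lra.
Qed.

Lemma rsum_nonpos (f : A -> R) (L : list A) :
  (forall a, In a L -> f a <= 0) -> rsum (map f L) <= 0.
Proof.
  induction L as [|a L IH]; unfold rsum in *; simpl; intros Hf; [lra|].
  pose proof (Hf a (or_introl eq_refl)). pose proof (IH (fun b Hb => Hf b (or_intror Hb))). lra.
Qed.

Lemma rsum_scal (c : R) (f : A -> R) (L : list A) :
  rsum (map (fun a => c * f a) L) = c * rsum (map f L).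
Proof. induction L as [|a L IH]; unfold rsum in *; simpl; [ring|]. rewrite IH. ring. Qed.

Lemma rsum_affine (a b : R) (f g : A -> R) (L : list A) :
  rsum (map (fun n => a * f n + b + g n) L)
  = a * rsum (map f L) + b * INR (length L) + rsum (map g L).
Proof.
  induction L as [|x L IH]; unfold rsum in *; cbn [map fold_right length]; [simpl; ring|].
  rewrite IH, S_INR. ring.
Qed.

Lemma rsum_minus (f g : A -> R) (L : list A) :
  rsum (map (fun a => f a - g a) L) = rsum (map f L) - rsum (map g L).
Proof. induction L as [|a L IH]; unfold rsum in *; simpl; [ring|]. rewrite IH. ring. Qed.

Lemma rsum_filter (P : A -> bool) (f : A -> R) (L : list A) :
  rsum (map f L) = rsum (map f (filter P L)) + rsum (map f (filter (fun a => negb (P a)) L)).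
Proof.
  induction L as [|a L IH]; unfold rsum in *; simpl; [ring|].
  destruct (P a); simpl; rewrite IH; ring.
Qed.

Lemma prod_pos (f : A -> R) (L : list A) :
  (forall a, In a L -> 0 < f a) -> 0 < fold_right Rmult 1 (map f L).
Proof.
  induction L as [|a L IH]; simpl; intros Hf; [lra|].
  apply Rmult_lt_0_compat; auto.
Qed.

Lemma ln_prod_div (f g : A -> R) (L : list A) :
  (forall a, In a L -> 0 < f a /\ 0 < g a) ->
  ln (fold_right Rmult 1 (map f L) / fold_right Rmult 1 (map g L))
  = rsum (map (fun a => ln (f a / g a)) L).
Proof.
  induction L as [|a L IH]; simpl; intros Hfg.
  - rewrite Rdiv_1_r. apply ln_1.
  - assert (0 < fold_right Rmult 1 (map f L)) by (apply prod_pos; intros; apply Hfg; auto).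
    assert (0 < fold_right Rmult 1 (map g L)) by (apply prod_pos; intros; apply Hfg; auto).
    destruct (Hfg a (or_introl eq_refl)).
    rewrite <- IH by auto.
    replace (f a * fold_right Rmult 1 (map f L) / (g a * fold_right Rmult 1 (map g L)))
      with (f a / g a * (fold_right Rmult 1 (map f L) / fold_right Rmult 1 (map g L)))
      by (field; lra).
    apply ln_mult; apply Rdiv_lt_0_compat; assumption.
Qed.

End ListSums.

Lemma rsum_NoDup_all_eq_le (v : Z) (f : Z -> R) (L : list Z) :
  NoDup L -> (forall j, In j L -> j = v) -> 0 <= f v -> rsum (map f L) <= f v.
Proof.
  intros Hnd Hv Hf. destruct L as [|a [|b L]]; unfold rsum; simpl; [lra| |].
  - rewrite (Hv a) by (simpl; auto). lra.
  - exfalso. inversion Hnd as [|? ? Ha]. apply Ha.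
    rewrite (Hv a), (Hv b) by (simpl; auto). simpl; auto.
Qed.

Lemma rsum_inv_sq_le_aux (N : nat) (L : list Z) : NoDup L ->
  (forall j, In j L -> (1 <= j <= Z.of_nat N)%Z) ->
  rsum (map (fun j => / IZR j ^ 2) L) <= 2 - 2 / (INR N + 1).
Proof.
  revert L. induction N as [|N IH]; intros L Hnd HL.
  - destruct L as [|a L]; [unfold rsum; simpl; lra|].
    specialize (HL a (or_introl eq_refl)). lia.
  - set (top := Z.of_nat (S N)).
    rewrite (rsum_filter (fun j => Z.eqb j top)).
    assert (Htop : rsum (map (fun j => / IZR j ^ 2) (filter (fun j => Z.eqb j top) L))
                   <= / IZR top ^ 2).
    { apply (rsum_NoDup_all_eq_le top (fun j => / IZR j ^ 2)); [apply NoDup_filter; assumption| |].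
      - intros j Hj. apply filter_In in Hj. apply Z.eqb_eq, Hj.
      - left. apply Rinv_0_lt_compat, pow_lt, IZR_lt. lia. }
    assert (Hrest : rsum (map (fun j => / IZR j ^ 2) (filter (fun j => negb (Z.eqb j top)) L))
                    <= 2 - 2 / (INR N + 1)).
    { apply IH; [apply NoDup_filter; assumption|].
      intros j Hj. apply filter_In in Hj. destruct Hj as [Hj Hne].
      apply negb_true_iff, Z.eqb_neq in Hne. specialize (HL j Hj). unfold top in *. lia. }
    replace (/ IZR top ^ 2) with (/ (INR N + 1) ^ 2) in Htop
      by (unfold top; rewrite <- INR_IZR_INZ, S_INR; reflexivity).
    rewrite S_INR.
    pose proof (pos_INR N).
    assert (/ (INR N + 1) ^ 2 <= 2 / (INR N + 1) - 2 / (INR N + 1 + 1)).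
    { apply (Rmult_le_reg_r ((INR N + 1) ^ 2 * (INR N + 1 + 1))); [nra|].
      field_simplify; lra. }
    lra.
Qed.

Lemma rsum_inv_sq_le_2 (L : list Z) : NoDup L -> (forall j, In j L -> (1 <= j)%Z) ->
  rsum (map (fun j => / IZR j ^ 2) L) <= 2.
Proof.
  intros Hnd HL.
  set (N := fold_right Z.max 0%Z L).
  assert (HN : forall j, In j L -> (j <= N)%Z).
  { unfold N. clear. induction L as [|a L IH]; simpl; intros j Hj; [contradiction|].
    destruct Hj as [<-|Hj]; [lia|]. specialize (IH j Hj). lia. }
  assert (0 <= N)%Z by (unfold N; clear; induction L; simpl; lia).
  pose proof (rsum_inv_sq_le_aux (Z.to_nat N) L Hnd) as Hb.
  assert (0 < INR (Z.to_nat N) + 1) by (pose proof (pos_INR (Z.to_nat N)); lra).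
  assert (0 <= 2 / (INR (Z.to_nat N) + 1)) by (apply Rlt_le, Rdiv_lt_0_compat; lra).
  assert (rsum (map (fun j => / IZR j ^ 2) L) <= 2 - 2 / (INR (Z.to_nat N) + 1))
    by (apply Hb; intros j Hj; specialize (HL j Hj); specialize (HN j Hj); lia).
  lra.
Qed.

Lemma rsum_indicator_ge (v : Z) (S : R) (L : list Z) : NoDup L -> S <= 0 ->
  S <= rsum (map (fun j => if Z.eqb j v then S else 0) L).
Proof.
  intros Hnd HS.
  rewrite (rsum_filter (fun j => Z.eqb j v)).
  assert (Hoff : forall L', rsum (map (fun j => if Z.eqb j v then S else 0)
                               (filter (fun j => negb (Z.eqb j v)) L')) = 0).
  { induction L' as [|a L' IH]; [reflexivity|]. simpl.
    destruct (Z.eqb a v) eqn:Ea; simpl; [exact IH|].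
    rewrite Ea. unfold rsum in *. rewrite IH. ring. }
  rewrite Hoff, Rplus_0_r.
  assert (Hon : forall j, In j (filter (fun j => Z.eqb j v) L) -> j = v)
    by (intros j Hj; apply filter_In in Hj; apply Z.eqb_eq, Hj).
  pose proof (NoDup_filter (fun j => Z.eqb j v) Hnd) as Hnd'.
  destruct (filter (fun j => Z.eqb j v) L) as [|a [|b L']]; unfold rsum; simpl.
  - lra.
  - rewrite (Hon a) by (simpl; auto). rewrite Z.eqb_refl. lra.
  - exfalso. inversion Hnd' as [|? ? Ha]. apply Ha.
    rewrite (Hon a), (Hon b) by (simpl; auto). simpl; auto.
Qed.

(* An injection of [{r | |r| >= 2}] into the positive integers such that
   [|r + x| >= (2 - |x|) * pole_index r / 4] whenever [|x| < 2]. *)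
Definition pole_index (r : Z) : Z := if (0 <? r)%Z then (2 * r - 2)%Z else (-2 * r - 3)%Z.

Lemma pole_index_inj r1 r2 : pole_index r1 = pole_index r2 -> r1 = r2.
Proof. unfold pole_index. destruct (0 <? r1)%Z eqn:E1, (0 <? r2)%Z eqn:E2; intros; lia. Qed.

Lemma inv_sq_shift_le (x : R) (r : Z) : Rabs x < 2 -> (2 <= Z.abs r)%Z ->
  (1 <= pole_index r)%Z /\
  / (IZR r + x)^2 <= 16 / (2 - Rabs x)^2 * / IZR (pole_index r) ^ 2.
Proof.
  intros Hx Hr. set (d := 2 - Rabs x).
  pose proof (Rle_abs x). pose proof (Rle_abs (- x)). rewrite Rabs_Ropp in *.
  assert (Key : (1 <= pole_index r)%Z /\ d * IZR (pole_index r) <= 4 * Rabs (IZR r + x)).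
  { unfold pole_index. destruct (0 <? r)%Z eqn:E.
    - apply Z.ltb_lt in E. assert (2 <= IZR r) by (apply IZR_le; lia).
      rewrite Rabs_right by lra. rewrite minus_IZR, mult_IZR. split; [lia|].
      simpl IZR. unfold d. nra.
    - apply Z.ltb_ge in E. assert (IZR r <= -2) by (apply IZR_le; lia).
      rewrite Rabs_left by lra. rewrite minus_IZR, mult_IZR. split; [lia|].
      simpl IZR. unfold d. nra. }
  destruct Key as [HJ Hk]. split; [exact HJ|].
  assert (1 <= IZR (pole_index r)) by (apply IZR_le; exact HJ).
  assert (0 < d) by (unfold d; lra).
  rewrite <- (pow2_abs (IZR r + x)).
  replace (16 / d^2 * / IZR (pole_index r) ^ 2) with (/ (d * IZR (pole_index r) / 4)^2)
    by (field; lra).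
  apply Rinv_le_contravar; [apply pow_lt; nra|].
  apply pow_incr. split; [|lra]. apply Rmult_le_pos; [nra|lra].
Qed.

Lemma rsum_inv_sq_shift_le {T} (x : R) (r : T -> Z) (L : list T) : Rabs x < 2 ->
  NoDup (map r L) -> (forall n, In n L -> (2 <= Z.abs (r n))%Z) ->
  rsum (map (fun n => / (IZR (r n) + x)^2) L) <= 32 / (2 - Rabs x)^2.
Proof.
  intros Hx Hnd Hr. set (d := 2 - Rabs x).
  assert (0 < 16 / d^2) by (apply Rdiv_lt_0_compat; [lra|apply pow_lt; unfold d; lra]).
  apply (Rle_trans _ (rsum (map (fun n => 16 / d^2 * / IZR (pole_index (r n)) ^ 2) L))).
  { apply rsum_le. intros n Hn. apply (inv_sq_shift_le x (r n) Hx (Hr n Hn)). }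
  assert (Hsum : rsum (map (fun j => / IZR j ^ 2) (map pole_index (map r L))) <= 2).
  { apply rsum_inv_sq_le_2.
    - apply NoDup_map_NoDup_ForallPairs; [|exact Hnd]. intros ? ? _ _. apply pole_index_inj.
    - intros j Hj. rewrite map_map in Hj. apply in_map_iff in Hj. destruct Hj as [n [<- Hn]].
      apply (inv_sq_shift_le x (r n) Hx (Hr n Hn)). }
  rewrite !map_map in Hsum.
  replace (32 / d^2) with (16 / d^2 * 2) by (field; unfold d; lra).
  rewrite rsum_scal. apply Rmult_le_compat_l; lra.
Qed.

Lemma one_lt_ln_4_div c : 0 < c < 1 -> 1 < ln (4 / c).
Proof.
  intros Hc. rewrite <- (ln_exp 1). apply ln_increasing; [apply exp_pos|].
  pose proof exp_le_3. apply (Rlt_le_trans _ 4); [lra|].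
  apply (Rmult_le_reg_r c); [lra|]. field_simplify; lra.
Qed.

Section LowerBound.

Variables (Q D c x A : R).
Hypotheses (HQ : 11 <= Q) (HD : 0 < D < 1) (HA : 1 <= A) (HDA : D * A <= 1)
  (Hx : -2 < x) (HxD : x <= 2 - D / (1 - c)) (Hc : 100 / Q^2 <= c) (Hc1 : c < 1).

Lemma c_pos : 0 < c.
Proof. assert (0 < 100 / Q^2) by (apply Rdiv_lt_0_compat; nra). lra. Qed.

Lemma Rabs_x_lt_2 : Rabs x < 2.
Proof.
  pose proof c_pos. assert (0 < D / (1 - c)) by (apply Rdiv_lt_0_compat; lra).
  apply Rabs_def1; lra.
Qed.

Lemma D_le_pole_distance : D <= (1 - c) * (2 - x).
Proof.
  pose proof c_pos.
  apply (Rmult_le_reg_r (/ (1 - c))); [apply Rinv_0_lt_compat; lra|].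
  replace ((1 - c) * (2 - x) * / (1 - c)) with (2 - x) by (field; lra).
  fold (D / (1 - c)). lra.
Qed.

Lemma x_le_2_sub_D : x <= 2 - D.
Proof.
  pose proof c_pos.
  assert (D <= D / (1 - c)) by (apply (Rmult_le_reg_r (1 - c)); [lra|]; field_simplify; nra).
  lra.
Qed.

(* The residue [r = -2] is the only one for which [|r + x| = 2 - x] may be as
   small as [D]; it then contributes [ln (c / 4)], which is affordable only
   when [A (2 - |x|) < 2].  Otherwise [2 D <= 2 - |x|] and it is as harmless as
   the other residues. *)
Definition pole_correction : R := if Rlt_dec (A * (2 - Rabs x)) 2 then ln (c / 4) else 0.

Lemma pole_correction_nonpos : pole_correction <= 0.
Proof.
  pose proof c_pos. unfold pole_correction. destruct Rlt_dec; [|lra].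
  rewrite <- ln_1. left. apply ln_increasing; lra.
Qed.

Lemma Bterm_lower_bound (r : Z) eps :
  0 < eps <= D -> (2 <= Z.abs r)%Z -> Rabs (IZR r + x) <= Q / 2 ->
  -6 * (D^2 / (IZR r + x)^2) - 16 * (D^2 / Q^2) + (if Z.eqb r (-2) then pole_correction else 0)
    <= Bterm (PI * (IZR r + x) / Q) (PI * eps / Q) <= 0 /\
  sin (PI * (IZR r + x) / Q) <> 0 /\ sin (PI * (IZR r + x) / Q + PI * eps / Q) <> 0.
Proof.
  intros Heps Hr Hrq. pose proof Rabs_x_lt_2. pose proof x_le_2_sub_D.
  pose proof pole_correction_nonpos. pose proof (Rle_abs x).
  destruct (Z.eq_dec r (-2)) as [->|Hne].
  - rewrite Z.eqb_refl. change (IZR (-2)) with (-2) in *.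
    unfold pole_correction in *. destruct (Rlt_dec (A * (2 - Rabs x)) 2) as [HY|HY].
    + assert (0 <= D^2 / (-2 + x)^2)
        by (replace (D^2 / (-2 + x)^2) with ((D / (-2 + x))^2) by (field; lra); apply pow2_ge_0).
      assert (0 <= D^2 / Q^2)
        by (replace (D^2 / Q^2) with ((D / Q)^2) by (field; lra); apply pow2_ge_0).
      destruct (Bterm_bounds_near_pole Q (-2 + x) eps D c HQ Heps (proj2 HD) ltac:(lra) Hrq
                  ltac:(pose proof D_le_pole_distance; lra) Hc Hc1) as ([G1 G2] & G3 & G4).
      repeat split; try assumption; lra.
    + assert (2 * D <= 2 - Rabs x) by nra.
      destruct (Bterm_bounds_regular Q (-2 + x) eps D HQ Heps (proj2 HD) Hrq ltac:(right; lra))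
        as ([G1 G2] & G3 & G4).
      repeat split; try assumption; lra.
  - rewrite (proj2 (Z.eqb_neq r (-2)) Hne), Rplus_0_r.
    assert (Hcase : 0 < IZR r + x \/ 2 * D <= - (IZR r + x)).
    { destruct (Z_le_gt_dec 2 r); [left|right].
      - assert (2 <= IZR r) by (apply IZR_le; lia). lra.
      - assert (IZR r <= -3) by (apply IZR_le; lia). lra. }
    exact (Bterm_bounds_regular Q (IZR r + x) eps D HQ Heps (proj2 HD) Hrq Hcase).
Qed.

Lemma lower_bound_arith :
  - 300 * ln (4 / c) / ((2 - Rabs x)^2 * A^2)
    <= -6 * D^2 * (32 / (2 - Rabs x)^2) - 16 * D^2 / Q + pole_correction.
Proof.
  pose proof c_pos. pose proof Rabs_x_lt_2. pose proof (Rabs_pos x).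
  pose proof (one_lt_ln_4_div c ltac:(lra)).
  set (L := ln (4 / c)) in *. set (d := 2 - Rabs x) in *. set (Y := A * d).
  assert (Hd : 0 < d <= 2) by (unfold d; lra).
  assert (HY : 0 < Y) by (unfold Y; nra).
  assert (HDA2 : 0 <= (D * A)^2 <= 1)
    by (assert (0 <= D * A) by nra; split; [apply pow2_ge_0|nra]).
  assert (Hreg : 6 * D^2 * (32 / d^2) + 16 * D^2 / Q <= 200 / Y^2).
  { replace (6 * D^2 * (32 / d^2) + 16 * D^2 / Q)
      with ((192 + 16 * (d^2 / Q)) * (D * A)^2 / Y^2) by (unfold Y; field; lra).
    apply Rmult_le_compat_r; [left; apply Rinv_0_lt_compat; nra|].
    assert (0 <= d^2 / Q <= 4 / 11).
    { split; [apply Rmult_le_pos; [nra|left; apply Rinv_0_lt_compat; lra]|].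
      apply (Rmult_le_reg_r Q); [lra|]. field_simplify; nra. }
    nra. }
  replace (- 300 * L / (d^2 * A^2)) with (- 300 * L / Y^2) by (unfold Y; field; lra).
  assert (H200 : 200 / Y^2 <= 200 * L / Y^2)
    by (apply Rmult_le_compat_r; [left; apply Rinv_0_lt_compat; nra|lra]).
  unfold pole_correction. fold d Y. destruct (Rlt_dec Y 2) as [Hlt|Hge].
  - replace (ln (c / 4)) with (- L)
      by (unfold L; rewrite <- ln_Rinv by (apply Rdiv_lt_0_compat; lra); f_equal; field; lra).
    assert (L <= 4 * L / Y^2).
    { apply (Rmult_le_reg_r (Y^2)); [nra|]. field_simplify; [|lra].
      assert (Y^2 < 4) by nra. nra. }
    unfold Rdiv in *. nra.
  - unfold Rdiv in *. nra.
Qed.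

Lemma rsum_Bterm_bounds (L : list nat) (r : nat -> Z) (eps : nat -> R) :
  NoDup (map r L) -> INR (length L) <= Q ->
  (forall n, In n L -> 0 < eps n <= D /\ (2 <= Z.abs (r n))%Z /\ Rabs (IZR (r n) + x) <= Q / 2) ->
  - 300 * ln (4 / c) / ((2 - Rabs x)^2 * A^2)
    <= rsum (map (fun n => Bterm (PI * (IZR (r n) + x) / Q) (PI * eps n / Q)) L) <= 0.
Proof.
  intros Hnd Hlen Hn. pose proof c_pos. pose proof Rabs_x_lt_2.
  split.
  - apply (Rle_trans _ _ _ lower_bound_arith).
    apply (Rle_trans _ (rsum (map (fun n => -6 * D^2 * / (IZR (r n) + x)^2 + - (16 * D^2 / Q^2)
                                   + (if Z.eqb (r n) (-2) then pole_correction else 0)) L))).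
    2:{ apply rsum_le. intros n Hin. destruct (Hn n Hin) as (Heps & Hr & Hrq).
        destruct (Bterm_lower_bound (r n) (eps n) Heps Hr Hrq) as ([Hlow _] & _).
        unfold Rdiv in *. lra. }
    rewrite rsum_affine.
    assert (Hsq : rsum (map (fun n => / (IZR (r n) + x)^2) L) <= 32 / (2 - Rabs x)^2)
      by (apply rsum_inv_sq_shift_le; auto; apply Hn).
    assert (Hcorr : pole_correction
                    <= rsum (map (fun n => if Z.eqb (r n) (-2) then pole_correction else 0) L)).
    { rewrite <- (map_map r (fun j => if Z.eqb j (-2) then pole_correction else 0)).
      apply rsum_indicator_ge; [exact Hnd|].
      unfold pole_correction. destruct Rlt_dec; [|lra].
      rewrite <- ln_1. left. apply ln_increasing; lra. }
    assert (Hlen' : - (16 * D^2 / Q) <= - (16 * D^2 / Q^2) * INR (length L)).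
    { replace (- (16 * D^2 / Q)) with (- (16 * D^2 / Q^2) * Q) by (field; lra).
      assert (0 <= 16 * D^2 / Q^2) by (apply Rmult_le_pos; [nra|left; apply Rinv_0_lt_compat; nra]).
      nra. }
    assert (0 <= D^2) by apply pow2_ge_0.
    nra.
  - apply rsum_nonpos. intros n Hin. destruct (Hn n Hin) as (Heps & Hr & Hrq).
    apply (Bterm_lower_bound (r n) (eps n) Heps Hr Hrq).
Qed.

End LowerBound.

(** * Reduction modulo [PI] *)

Lemma cos_Zpi_sq m : cos (IZR m * PI) ^ 2 = 1.
Proof.
  pose proof (sin2_cos2 (IZR m * PI)) as H.
  rewrite (sin_eq_0_1 (IZR m * PI)) in H by (exists m; reflexivity).
  unfold Rsqr in H. simpl. lra.
Qed.

Lemma Rabs_sin_add_Zpi v m : Rabs (sin (v + IZR m * PI)) = Rabs (sin v).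
Proof.
  rewrite sin_plus, (sin_eq_0_1 (IZR m * PI)) by (exists m; reflexivity).
  rewrite Rmult_0_r, Rplus_0_r, Rabs_mult.
  assert (Rabs (cos (IZR m * PI)) = 1).
  { pose proof (cos_Zpi_sq m). rewrite <- (pow2_abs (cos _)) in *.
    pose proof (Rabs_pos (cos (IZR m * PI))). nra. }
  rewrite H. ring.
Qed.

Lemma cot_add_Zpi v m : cot (v + IZR m * PI) = cot v.
Proof.
  unfold cot. rewrite sin_plus, cos_plus, (sin_eq_0_1 (IZR m * PI)) by (exists m; reflexivity).
  pose proof (cos_Zpi_sq m).
  assert (cos (IZR m * PI) <> 0) by (intros E; rewrite E in *; simpl in *; lra).
  unfold Rdiv. rewrite !Rmult_0_r, Rminus_0_r, Rplus_0_r, Rinv_mult.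
  transitivity (cos v * / sin v * (cos (IZR m * PI) * / cos (IZR m * PI))); [ring|].
  rewrite Rinv_r by assumption. ring.
Qed.

Lemma Rabs_2_sin_sign s z : s = 1 \/ s = -1 -> Rabs (2 * sin (s * z)) = 2 * Rabs (sin z).
Proof.
  intros [-> | ->].
  - rewrite Rmult_1_l, Rabs_mult, Rabs_right by lra. reflexivity.
  - replace (-1 * z) with (- z) by ring.
    rewrite sin_neg, Rabs_mult, Rabs_Ropp, (Rabs_right 2) by lra. reflexivity.
Qed.

Lemma Rabs_rational_factor P Q s x N (r m : Z) :
  (s = 1 \/ s = -1) -> Q <> 0 -> IZR r + Q * IZR m = s * N * P ->
  Rabs (2 * sin (PI * (N * (P / Q) + s * x / Q))) = 2 * Rabs (sin (PI * (IZR r + x) / Q)).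
Proof.
  intros Hs HQ Hr.
  replace (PI * (N * (P / Q) + s * x / Q)) with (s * (PI * (IZR r + x) / Q + IZR m * PI)).
  - rewrite Rabs_2_sin_sign, Rabs_sin_add_Zpi by exact Hs. reflexivity.
  - replace (IZR r) with (s * N * P - Q * IZR m) by lra.
    destruct Hs; subst s; field; exact HQ.
Qed.

Lemma Rabs_irrational_factor alpha P Q s delta x N (r m : Z) :
  (s = 1 \/ s = -1) -> Q <> 0 -> Q * alpha - P = s * delta -> IZR r + Q * IZR m = s * N * P ->
  Rabs (2 * sin (PI * (N * alpha + s * x / Q)))
  = 2 * Rabs (sin (PI * (IZR r + x) / Q + PI * (N * delta) / Q)).
Proof.
  intros Hs HQ Hdelta Hr.
  replace (PI * (N * alpha + s * x / Q))
    with (s * (PI * (IZR r + x) / Q + PI * (N * delta) / Q + IZR m * PI)).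
  - rewrite Rabs_2_sin_sign, Rabs_sin_add_Zpi by exact Hs. reflexivity.
  - replace alpha with ((P + s * delta) / Q) by (rewrite <- Hdelta; field; exact HQ).
    replace (IZR r) with (s * N * P - Q * IZR m) by lra.
    destruct Hs; subst s; field; exact HQ.
Qed.

Lemma summand_eq_Bterm alpha P Q s delta x N (r m : Z) :
  (s = 1 \/ s = -1) -> Q <> 0 -> Q * alpha - P = s * delta -> IZR r + Q * IZR m = s * N * P ->
  sin (PI * (IZR r + x) / Q) <> 0 ->
  ln (Rabs (2 * sin (PI * (N * alpha + s * x / Q))) /
      Rabs (2 * sin (PI * (N * (P / Q) + s * x / Q))))
  - sin (PI * N * delta / Q) * cot (PI * (N * s * P + x) / Q)
  = Bterm (PI * (IZR r + x) / Q) (PI * (N * delta) / Q).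
Proof.
  intros Hs HQ Hdelta Hr Hsin.
  rewrite (Rabs_rational_factor P Q s x N r m), (Rabs_irrational_factor alpha P Q s delta x N r m)
    by assumption.
  replace (PI * (N * s * P + x) / Q) with (PI * (IZR r + x) / Q + IZR m * PI)
    by (replace (IZR r) with (s * N * P - Q * IZR m) by lra; field; exact HQ).
  rewrite cot_add_Zpi. unfold Bterm.
  assert (0 < Rabs (sin (PI * (IZR r + x) / Q))) by (apply Rabs_pos_lt; exact Hsin).
  f_equal.
  - f_equal. field. lra.
  - do 2 f_equal. field. exact HQ.
Qed.

(** * Continued fractions and residues *)

Fixpoint alt_sign (k : nat) : Z := match k with O => 1%Z | S k' => (- alt_sign k')%Z end.

Lemma alt_sign_IZR k : IZR (alt_sign k) = (-1)^k.
Proof. induction k as [|k IH]; simpl; [reflexivity|]. rewrite opp_IZR, IH. ring. Qed.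

Lemma alt_sign_cases k : alt_sign k = 1%Z \/ alt_sign k = (-1)%Z.
Proof. induction k; simpl; lia. Qed.

Lemma Zfloor_spec y : IZR (Defs.Zfloor y) <= y < IZR (Defs.Zfloor y) + 1.
Proof. unfold Defs.Zfloor. destruct (base_Int_part y). lra. Qed.

Lemma one_le_Zfloor y : 1 <= y -> (1 <= Defs.Zfloor y)%Z.
Proof.
  intros Hy. pose proof (Zfloor_spec y).
  assert (Hpos : 0 < IZR (Defs.Zfloor y)) by lra. apply lt_IZR in Hpos. lia.
Qed.

Lemma irrational_mul_neq alpha P Q : irrational alpha -> (1 <= Q)%Z -> alpha * IZR Q <> IZR P.
Proof.
  intros Hi HQ E. apply Hi. exists P, Q. split; [lia|].
  rewrite <- E. field. apply not_0_IZR. lia.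
Qed.

(* [alpha] is the value of the continued fraction [a_0; ..., a_k, X] with
   complete quotient [X = cf_tail alpha (S k)]. *)
Definition convergent_invariant (alpha : R) (k : nat) : Prop :=
  let '((p, q), (p', q')) := cf_pq alpha k in
  let X := cf_tail alpha (S k) in
  alpha * (IZR q * X + IZR q') = IZR p * X + IZR p' /\ 1 < X /\
  (1 <= q)%Z /\ (0 <= q' <= q)%Z /\ (p * q' - p' * q = - alt_sign k)%Z.

Lemma convergent_invariant_holds alpha : irrational alpha -> forall k, convergent_invariant alpha k.
Proof.
  intros Hi k. induction k as [|k IH]; unfold convergent_invariant in *; simpl cf_pq.
  - unfold cf_a. change (cf_tail alpha 0) with alpha.
    change (cf_tail alpha 1) with (/ (alpha - IZR (Defs.Zfloor alpha))).
    pose proof (Zfloor_spec alpha).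
    assert (alpha <> IZR (Defs.Zfloor alpha)).
    { intros E. apply (irrational_mul_neq alpha (Defs.Zfloor alpha) 1 Hi ltac:(lia)).
      rewrite Rmult_1_r. exact E. }
    assert (0 < alpha - IZR (Defs.Zfloor alpha) < 1) by lra.
    repeat split; try lia.
    + field. lra.
    + rewrite <- Rinv_1. apply Rinv_lt_contravar; lra.
    + simpl. lia.
  - destruct (cf_pq alpha k) as [[p q] [p' q']].
    destruct IH as (E & HX & Hq & Hq' & Hdet).
    set (X := cf_tail alpha (S k)) in *.
    change (cf_tail alpha (S (S k))) with (/ (X - IZR (Defs.Zfloor X))).
    unfold cf_a. change (cf_tail alpha (S k)) with X.
    set (a := Defs.Zfloor X). pose proof (Zfloor_spec X) as Hf. fold a in Hf.
    assert (Ha : (1 <= a)%Z) by (apply one_le_Zfloor; lra).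
    assert (HXa : X <> IZR a).
    { intros EX. rewrite EX in E.
      apply (irrational_mul_neq alpha (p * a + p') (q * a + q') Hi ltac:(nia)).
      rewrite plus_IZR, !mult_IZR, plus_IZR, mult_IZR. lra. }
    assert (Hy : 0 < X - IZR a < 1) by lra.
    repeat split; try (simpl alt_sign); try nia.
    + rewrite !plus_IZR, !mult_IZR.
      apply (Rmult_eq_reg_r (X - IZR a)); [|lra].
      field_simplify; [nra|lra|lra].
    + rewrite <- Rinv_1. apply Rinv_lt_contravar; lra.
Qed.

Lemma convergent_facts alpha k : irrational alpha -> (1 <= k)%nat ->
  exists p', (cf_p alpha k * cf_q alpha (k - 1) - p' * cf_q alpha k = - alt_sign k)%Z /\
    (1 <= cf_q alpha (k - 1) <= cf_q alpha k)%Z /\ (1 <= cf_a alpha (S k))%Z /\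
    IZR (cf_q alpha k) * alpha - IZR (cf_p alpha k)
      = IZR (alt_sign k) / (IZR (cf_q alpha k) * cf_tail alpha (S k) + IZR (cf_q alpha (k - 1))) /\
    IZR (cf_a alpha (S k)) <= cf_tail alpha (S k).
Proof.
  intros Hi Hk. destruct k as [|j]; [lia|].
  pose proof (convergent_invariant_holds alpha Hi (S j)) as I1.
  pose proof (convergent_invariant_holds alpha Hi j) as I0.
  unfold convergent_invariant, cf_p, cf_q, cf_a in *. replace (S j - 1)%nat with j by lia.
  simpl cf_pq in I1 |- *. destruct (cf_pq alpha j) as [[p0 q0] [p0' q0']].
  set (X := cf_tail alpha (S (S j))) in *.
  destruct I1 as (E & HX & Hq & Hq' & Hdet). destruct I0 as (_ & _ & Hq0 & _).
  cbn [fst snd] in *. exists p0.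
  pose proof (Zfloor_spec X).
  pose proof (one_le_Zfloor X ltac:(lra)).
  set (q := (cf_a alpha (S j) * q0 + q0')%Z) in *.
  set (p := (cf_a alpha (S j) * p0 + p0')%Z) in *.
  repeat split; try lia; try lra.
  assert (0 < IZR q * X + IZR q0)
    by (pose proof (IZR_le 1 q Hq); pose proof (IZR_le 0 q0 ltac:(lia)); nra).
  apply (Rmult_eq_reg_r (IZR q * X + IZR q0)); [|lra].
  field_simplify; [|lra].
  apply (f_equal IZR) in Hdet. rewrite minus_IZR, !mult_IZR, opp_IZR in Hdet.
  pose proof (f_equal (Rmult (IZR q)) E). nra.
Qed.

Lemma dist_int_near y (P : Z) : Rabs (y - IZR P) <= 1/2 -> dist_int y = Rabs (y - IZR P).
Proof.
  intros Hy. unfold dist_int, Defs.Zfloor.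
  destruct (Rle_or_lt (IZR P) y) as [HP|HP].
  - rewrite Rabs_right in * by lra.
    rewrite <- (Int_part_spec y P) by lra. apply Rmin_left. lra.
  - rewrite Rabs_left in * by lra.
    rewrite <- (Int_part_spec y (P - 1)) by (rewrite minus_IZR; lra).
    rewrite minus_IZR. rewrite Rmin_right; lra.
Qed.

Lemma convergent_error alpha k : irrational alpha -> (1 <= k)%nat ->
  let q := IZR (cf_q alpha k) in
  q * alpha - IZR (cf_p alpha k) = (-1)^k * dist_int (q * alpha) /\
  0 < q * dist_int (q * alpha) < 1 /\
  q * dist_int (q * alpha) * IZR (cf_a alpha (S k)) <= 1.
Proof.
  intros Hi Hk q.
  destruct (convergent_facts alpha k Hi Hk) as (p' & _ & Hq & Ha & Herr & HaX).
  fold q in Herr.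
  set (X := cf_tail alpha (S k)) in *. set (q' := IZR (cf_q alpha (k - 1))) in *.
  assert (1 <= q) by (apply IZR_le; lia). assert (1 <= q') by (apply IZR_le; lia).
  assert (1 <= IZR (cf_a alpha (S k))) by (apply IZR_le; lia).
  assert (Hden : 2 <= q * X + q') by nra.
  set (delta := 1 / (q * X + q')).
  assert (Hdelta : 0 < delta <= 1/2).
  { unfold delta. split; [apply Rdiv_lt_0_compat; lra|].
    apply (Rmult_le_reg_r (q * X + q')); [lra|]. field_simplify; lra. }
  assert (Herr' : q * alpha - IZR (cf_p alpha k) = (-1)^k * delta).
  { rewrite Herr, <- alt_sign_IZR. unfold delta. field. lra. }
  assert (Hdist : dist_int (q * alpha) = delta).
  { assert (Hs : Rabs (IZR (alt_sign k)) = 1)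
      by (destruct (alt_sign_cases k) as [-> | ->]; [apply Rabs_R1|rewrite Rabs_left]; simpl; lra).
    assert (Habs : Rabs (q * alpha - IZR (cf_p alpha k)) = delta)
      by (rewrite Herr', Rabs_mult, <- alt_sign_IZR, Hs, (Rabs_right delta) by lra; ring).
    rewrite (dist_int_near _ (cf_p alpha k)); lra. }
  rewrite Hdist. repeat split; [exact Herr'| | |]; unfold delta.
  - apply Rmult_lt_0_compat; [lra|apply Rdiv_lt_0_compat; lra].
  - apply (Rmult_lt_reg_r (q * X + q')); [lra|]. field_simplify; nra.
  - apply (Rmult_le_reg_r (q * X + q')); [lra|]. field_simplify; nra.
Qed.

Section ResidueArithmetic.

Local Open Scope Z_scope.

Lemma residue_injective p q p' q' e n1 n2 m1 m2 :
  (e = 1 \/ e = -1) -> p * q' - p' * q = - e -> 1 <= n1 < q -> 1 <= n2 < q ->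
  e * n1 * p - q * m1 = e * n2 * p - q * m2 -> n1 = n2.
Proof.
  intros He Hdet Hn1 Hn2 E.
  assert (K : n1 - n2 = q * (e * (p' * (n1 - n2) - e * q' * (m1 - m2)))).
  { assert (E1 : q' * (e * n1 * p - q * m1) = q' * (e * n2 * p - q * m2)) by (rewrite E; ring).
    assert (E2 : (n1 - n2) * (p * q' - p' * q) = (n1 - n2) * - e) by (rewrite Hdet; ring).
    destruct He; subst e; nia. }
  set (t := e * (p' * (n1 - n2) - e * q' * (m1 - m2))) in K.
  assert (t = 0) by nia. nia.
Qed.

Lemma residue_abs_ge_2 p q p' q' e n m :
  (e = 1 \/ e = -1) -> p * q' - p' * q = - e -> 0 <= q' <= q ->
  1 <= n < q -> n <> q' -> n <> q - q' -> 2 <= Z.abs (e * n * p - q * m).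
Proof.
  intros He Hdet Hq' Hn N1 N2.
  set (r := e * n * p - q * m).
  (* [p q' = -e (mod q)] gives [n = - q' r (mod q)]. *)
  assert (K : n + r * q' = q * (- e * (e * q' * m - n * p'))).
  { assert (E1 : e * q' * r = e * q' * (e * n * p - q * m)) by reflexivity.
    assert (E2 : n * (p * q' - p' * q) = n * - e) by (rewrite Hdet; ring).
    destruct He; subst e; nia. }
  set (t := - e * (e * q' * m - n * p')) in K.
  assert (r <> 0 /\ r <> 1 /\ r <> -1) as (H0 & H1 & H2).
  { repeat split; intros Er; rewrite Er in K;
      (assert (t = 0 \/ t = 1 \/ 2 <= t \/ t <= -1) as [Ht|[Ht|[Ht|Ht]]] by lia); nia. }
  lia.
Qed.

End ResidueArithmetic.

(** * Decomposition of [Bstar] *)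

Lemma In_idx alpha k M n : In n (idx alpha k M) ->
  (1 <= n <= M)%nat /\ Z.of_nat n <> cf_q alpha (k - 1) /\
  Z.of_nat n <> (cf_q alpha k - cf_q alpha (k - 1))%Z.
Proof.
  unfold idx. intros Hn. apply filter_In in Hn. destruct Hn as [Hseq Hb].
  apply in_seq in Hseq. apply andb_true_iff in Hb. destruct Hb as [H1 H2].
  apply negb_true_iff, Z.eqb_neq in H1. apply negb_true_iff, Z.eqb_neq in H2.
  repeat split; auto; lia.
Qed.

Lemma NoDup_idx alpha k M : NoDup (idx alpha k M).
Proof. apply NoDup_filter, seq_NoDup. Qed.

Lemma length_idx alpha k M : (length (idx alpha k M) <= M)%nat.
Proof. unfold idx. rewrite <- (length_seq M 1) at 2. apply filter_length_le. Qed.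

(* The representative [r] of [e n p] modulo [q] with [-q/2 <= r + x < q/2]. *)
Definition nearest_residue (e p q : Z) (x : R) (n : nat) : Z :=
  (e * Z.of_nat n * p - q * Defs.Zfloor ((IZR (e * Z.of_nat n * p) + x) / IZR q + 1/2))%Z.

Lemma nearest_residue_bound e p q x n : (1 <= q)%Z ->
  Rabs (IZR (nearest_residue e p q x n) + x) <= IZR q / 2.
Proof.
  intros Hq. unfold nearest_residue.
  set (v := IZR (e * Z.of_nat n * p)).
  set (m := Defs.Zfloor ((v + x) / IZR q + 1/2)).
  pose proof (Zfloor_spec ((v + x) / IZR q + 1/2)) as Hm. fold m in Hm.
  assert (1 <= IZR q) by (apply IZR_le; exact Hq).
  assert (v + x + IZR q / 2 = IZR q * ((v + x) / IZR q + 1/2)) by (field; lra).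
  rewrite minus_IZR, (mult_IZR q). fold v m. apply Rabs_le. nra.
Qed.

Lemma nearest_residue_spec e p q x n : exists m : Z,
  IZR (nearest_residue e p q x n) + IZR q * IZR m = IZR e * INR n * IZR p.
Proof.
  unfold nearest_residue. set (m := Defs.Zfloor _). exists m.
  rewrite minus_IZR, !mult_IZR, <- INR_IZR_INZ. ring.
Qed.

Section Convergent.

Variables (alpha x : R) (k M : nat).
Hypotheses (Hi : irrational alpha) (Hk : (1 <= k)%nat).

Local Notation q := (IZR (cf_q alpha k)).
Local Notation delta := (dist_int (IZR (cf_q alpha k) * alpha)).
Local Notation r := (nearest_residue (alt_sign k) (cf_p alpha k) (cf_q alpha k) x).

Lemma Bstar_eq_rsum_Bterm :
  (forall n, In n (idx alpha k M) ->
     sin (PI * (IZR (r n) + x) / q) <> 0 /\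
     sin (PI * (IZR (r n) + x) / q + PI * (INR n * delta) / q) <> 0) ->
  Bstar alpha k M x
  = rsum (map (fun n => Bterm (PI * (IZR (r n) + x) / q) (PI * (INR n * delta) / q))
              (idx alpha k M)).
Proof.
  intros Hnz.
  destruct (convergent_error alpha k Hi Hk) as (Herr & Hqd & _).
  rewrite <- alt_sign_IZR in Herr.
  assert (HQ : q <> 0) by (intros E; rewrite E in Hqd; lra).
  assert (Hs : IZR (alt_sign k) = 1 \/ IZR (alt_sign k) = -1)
    by (destruct (alt_sign_cases k) as [-> | ->]; [left|right]; reflexivity).
  unfold Bstar, Pstar. cbv zeta. rewrite <- alt_sign_IZR.
  rewrite ln_prod_div.
  - change (fold_right Rplus 0) with rsum. rewrite <- rsum_minus.
    f_equal. apply map_ext_in. intros n Hn.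
    destruct (nearest_residue_spec (alt_sign k) (cf_p alpha k) (cf_q alpha k) x n) as [m Hm].
    apply (summand_eq_Bterm _ _ _ _ _ _ _ _ m Hs HQ Herr Hm), Hnz, Hn.
  - intros n Hn.
    destruct (nearest_residue_spec (alt_sign k) (cf_p alpha k) (cf_q alpha k) x n) as [m Hm].
    rewrite (Rabs_rational_factor _ _ _ _ _ _ m Hs HQ Hm).
    rewrite (Rabs_irrational_factor _ _ _ _ _ _ _ _ m Hs HQ Herr Hm).
    destruct (Hnz n Hn) as [H1 H2].
    split; apply Rmult_lt_0_compat; try lra; apply Rabs_pos_lt; assumption.
Qed.

Hypothesis HM : (Z.of_nat M < cf_q alpha k)%Z.

Lemma idx_residue_bounds n : In n (idx alpha k M) ->
  0 < INR n * delta <= q * delta /\ (2 <= Z.abs (r n))%Z /\ Rabs (IZR (r n) + x) <= q / 2.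
Proof.
  intros Hn. destruct (In_idx alpha k M n Hn) as (Hn1 & Hnq' & Hnq'').
  destruct (convergent_facts alpha k Hi Hk) as (p' & Hdet & Hq & _).
  destruct (convergent_error alpha k Hi Hk) as (_ & Hqd & _).
  assert (Hd : 0 < delta) by (assert (0 < q) by (apply IZR_lt; lia); nra).
  assert (1 <= INR n <= q) by (split; [apply (le_INR 1)|rewrite INR_IZR_INZ; apply IZR_le]; lia).
  split; [split; nra|split].
  - apply (residue_abs_ge_2 _ _ p' (cf_q alpha (k - 1))); try lia.
    apply alt_sign_cases.
  - apply nearest_residue_bound. lia.
Qed.

Lemma NoDup_map_nearest_residue : NoDup (map r (idx alpha k M)).
Proof.
  apply NoDup_map_NoDup_ForallPairs; [|apply NoDup_idx].
  intros n1 n2 Hn1 Hn2 E.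
  destruct (In_idx alpha k M n1 Hn1) as (H1 & _). destruct (In_idx alpha k M n2 Hn2) as (H2 & _).
  destruct (convergent_facts alpha k Hi Hk) as (p' & Hdet & _).
  apply Nat2Z.inj. unfold nearest_residue in E.
  eapply (residue_injective _ _ _ _ _ _ _ _ _ (alt_sign_cases k) Hdet); [lia|lia|exact E].
Qed.

End Convergent.

Lemma length_idx_le alpha k M : (Z.of_nat M < cf_q alpha k)%Z ->
  INR (length (idx alpha k M)) <= IZR (cf_q alpha k).
Proof.
  intros HM. rewrite INR_IZR_INZ. apply IZR_le.
  pose proof (length_idx alpha k M). lia.
Qed.

Lemma IZR_ge_11 (q : Z) : 0 < IZR q -> 100 / IZR q ^ 2 < 1 -> 11 <= IZR q.
Proof.
  intros Hq Hc.
  assert (100 < IZR q ^ 2).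
  { apply (Rmult_lt_compat_r (IZR q ^ 2)) in Hc; [|nra].
    replace (100 / IZR q ^ 2 * IZR q ^ 2) with 100 in Hc by (field; lra). lra. }
  assert (Hq10 : 10 < IZR q) by nra.
  apply lt_IZR in Hq10. apply IZR_le. lia.
Qed.

Theorem proposition7 :
  exists C : R, C > 0 /\
  forall (alpha : R) (k M : nat) (c x : R),
    irrational alpha ->
    (1 <= k)%nat ->
    (Z.of_nat M < cf_q alpha k)%Z ->
    100 / IZR (cf_q alpha k) ^ 2 <= c -> c < 1 ->
    IZR (cf_q alpha k) * dist_int (IZR (cf_q alpha k) * alpha) <= 2 * (1 - c) ->
    -2 < x ->
    x <= 2 - IZR (cf_q alpha k) * dist_int (IZR (cf_q alpha k) * alpha) / (1 - c) ->
    - C * ln (4 / c) / ((2 - Rabs x) ^ 2 * IZR (cf_a alpha (S k)) ^ 2)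
      <= Bstar alpha k M x
    /\ Bstar alpha k M x
      <= C * (1 / (IZR (cf_a alpha (S k)) ^ 2 * IZR (cf_q alpha k))).
Proof.
  exists 300. split; [lra|].
  intros alpha k M c x Hi Hk HM Hc Hc1 _ Hx HxD.
  destruct (convergent_error alpha k Hi Hk) as (_ & HD & HDA).
  destruct (convergent_facts alpha k Hi Hk) as (_ & _ & Hq & Ha & _).
  set (q := IZR (cf_q alpha k)) in *. set (a := IZR (cf_a alpha (S k))) in *.
  set (D := q * dist_int (q * alpha)) in *.
  assert (HA : 1 <= a) by (apply IZR_le; exact Ha).
  assert (HQ : 11 <= q) by (apply IZR_ge_11; [apply IZR_lt; lia|fold q; lra]).
  pose proof (idx_residue_bounds alpha x k M Hi Hk HM) as Hn.
  rewrite (Bstar_eq_rsum_Bterm alpha x k M Hi Hk)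
    by (intros n Hin; destruct (Hn n Hin) as (? & ? & ?); eapply Bterm_lower_bound; eassumption).
  destruct (rsum_Bterm_bounds q D c x a HQ HD HA HDA Hx HxD Hc Hc1 (idx alpha k M) _ _
              (NoDup_map_nearest_residue alpha x k M Hi Hk HM) (length_idx_le alpha k M HM) Hn)
    as [Hlow Hup].
  split; [exact Hlow|].
  apply (Rle_trans _ 0 _ Hup).
  apply Rmult_le_pos; [lra|]. apply Rlt_le, Rdiv_lt_0_compat; nra.
Qed.
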